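(* Let $k\ge1$ and $0\le s\le k$. The determinant of the Gram matrix $G^k_s$ (defined in the context) is a nonzero polynomial in $\mathbb{Z}[x]$ with leading coefficient $1$.
   Context: Partition diagrams: for $k\ge1$ let $[k]=\{1,\dots,k\}$, $[k']=\{1',\dots,k'\}$; a $k$-partition diagram is a set partition of $[k]\cup[k']$ (vertices $1,\dots,k$ in a top row, $1',\dots,k'$ in a bottom row). A block meeting both $[k]$ and $[k']$ is a through class; other blocks are horizontal edges. The propagating number $\sharp^p(d)$ is the number of through classes of $d$. The product of diagrams $d_1,d_2$: place $d_1$ above $d_2$, identify the bottom vertices of $d_1$ with the top vertices of $d_2$ (forming a middle row), take the partition of the top row of $d_1$ and bottom row of $d_2$ induced by connectivity, giving a diagram $d_3$; let $l(d_1,d_2)$ be the number of connected components lying entirely in the middle row. Then $d_1\circ d_2=x^{l(d_1,d_2)}d_3$, and $\sharp^p(d_1 d_2)$ means $\sharp^p(d_3)$. Index set: $J^k_s$ is the set of pairs $D=(\pi,T)$ where $\pi$ is a set partition of $[k]$ and $T$ is a set of $s$ blocks of $\pi$. To $D$ associate the diagram $d_D$ whose blocks are $B\cup B'$ for $B\in T$, and $B$, $B'$ separately for $B\in\pi\setminus T$ (here $B'=\{i':i\in B\}$). Gram matrix: $G^k_s$ is the square matrix with rows and columns indexed by $J^k_s$ whose $(D,E)$ entry is $x^{l(d_D,d_E)}$ if $\sharp^p(d_D d_E)=s$ and $0$ otherwise. *)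

From HB Require Import structures.
From mathcomp Require Import all_boot all_order all_algebra.
Set Implicit Arguments. Unset Strict Implicit. Unset Printing Implicit Defensive.
Import GRing.Theory.

Definition vert (k : nat) := ('I_k + 'I_k)%type.
Definition top (k : nat) (i : 'I_k) : vert k := inl i.
Definition bot (k : nat) (i : 'I_k) : vert k := inr i.

Definition diagram (k : nat) := {set {set vert k}}.
Definition is_diagram (k : nat) (d : diagram k) : bool := partition d [set: vert k].

Definition through (k : nat) (B : {set vert k}) : bool :=
  [exists i, top i \in B] && [exists i, bot i \in B].
Definition propnum (k : nat) (d : diagram k) : nat := #|[set B in d | through B]|%N.

(* Stacking: vertices of three rows, row 0 = top of d1, row 1 = middle, row 2 = bottom of d2. *)
Definition row0 : 'I_3 := inord 0.
Definition row1 : 'I_3 := inord 1.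
Definition row2 : 'I_3 := inord 2.
Definition svert (k : nat) := ('I_3 * 'I_k)%type.

Definition emb1 (k : nat) (v : vert k) : svert k :=
  match v with inl i => (row0, i) | inr i => (row1, i) end.
Definition emb2 (k : nat) (v : vert k) : svert k :=
  match v with inl i => (row1, i) | inr i => (row2, i) end.
(* outer rows: top of d1 and bottom of d2 form the vertices of the product *)
Definition embo (k : nat) (v : vert k) : svert k :=
  match v with inl i => (row0, i) | inr i => (row2, i) end.

Definition stack_edge (k : nat) (d1 d2 : diagram k) : rel (svert k) :=
  fun u w =>
    [exists B in d1, (u \in @emb1 k @: B) && (w \in @emb1 k @: B)]
    || [exists B in d2, (u \in @emb2 k @: B) && (w \in @emb2 k @: B)].

Definition stack_comp (k : nat) (d1 d2 : diagram k) (u : svert k) : {set svert k} :=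
  [set w | connect (stack_edge d1 d2) u w].
Definition stack_comps (k : nat) (d1 d2 : diagram k) : {set {set svert k}} :=
  [set stack_comp d1 d2 u | u : svert k].

Definition middle_row (k : nat) : {set svert k} := [set u | u.1 == row1].
Definition nloops (k : nat) (d1 d2 : diagram k) : nat :=
  #|[set C in stack_comps d1 d2 | C \subset middle_row k]|.

Definition dprod (k : nat) (d1 d2 : diagram k) : diagram k :=
  [set [set v : vert k | embo v \in C] | C : {set svert k} in stack_comps d1 d2] :\ set0.

Definition Jpred (k s : nat) (D : {set {set 'I_k}} * {set {set 'I_k}}) : bool :=
  [&& partition D.1 [set: 'I_k], D.2 \subset D.1 & #|D.2| == s].
Definition Jks (k s : nat) := {D : {set {set 'I_k}} * {set {set 'I_k}} | Jpred s D}.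

Definition liftT (k : nat) (B : {set 'I_k}) : {set vert k} := [set top i | i in B].
Definition liftB (k : nat) (B : {set 'I_k}) : {set vert k} := [set bot i | i in B].

Definition dD (k : nat) (D : {set {set 'I_k}} * {set {set 'I_k}}) : diagram k :=
  [set liftT B :|: liftB B | B in D.2]
  :|: [set liftT B | B in D.1 :\: D.2]
  :|: [set liftB B | B in D.1 :\: D.2].

Local Open Scope ring_scope.
Definition gram_entry (k s : nat) (D E : {set {set 'I_k}} * {set {set 'I_k}}) : {poly int} :=
  if propnum (dprod (dD D) (dD E)) == s then 'X ^+ nloops (dD D) (dD E) else 0.

Definition Gram (k s : nat) : 'M[{poly int}]_#|{: Jks k s}| :=
  \matrix_(i, j) gram_entry s (val (enum_val i)) (val (enum_val j)).

(* Weight the row of (pi, T) by a(pi, T) = #|pi :\: T|, its number of unmarked blocks.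
   In d_D d_D every marked block closes up into a through class and every unmarked block
   leaves exactly one loop in the middle row, so the diagonal entry is x^a(D).  In d_D d_E
   every loop lies in the middle row and is determined by the unmarked block of D (or of E)
   through any of its vertices, so l <= a(D) and l <= a(E).  If both are equalities and the
   propagating number is s = #|T_D| = #|T_E|, loops and through classes match the blocks of
   D and of E one to one, which forces D = E.  Hence every nonzero off-diagonal entry x^l
   satisfies 2l < a(D) + a(E), and in the Leibniz expansion of the determinant the identity
   contributes x^(sum a) while every other permutation contributes lower degree terms. *)

From Pilot Require Import Defs.
From HB Require Import structures.
From mathcomp Require Import all_boot all_order all_algebra perm zify.
Set Implicit Arguments. Unset Strict Implicit. Unset Printing Implicit Defensive.
(* Re-import Defs so that its [row0] shadows the matrix lemma of the same name. *)
Import Defs GRing.Theory.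

Section DominantDiagonal.
Local Open Scope ring_scope.
Variables (R : comNzRingType) (n : nat) (M : 'M[{poly R}]_n) (a : 'I_n -> nat).
Hypothesis diagM : forall i, M i i = 'X^(a i).
Hypothesis offdiagM : forall i j, i != j ->
  M i j = 0 \/ exists2 e, M i j = 'X^e & (e.*2 < a i + a j)%N.

Lemma entry_monomial i j : M i j = 0 \/
  M i j = 'X^((size (M i j)).-1) /\ ((size (M i j)).-1.*2 <= a i + a j ?= iff (i == j))%N.
Proof.
have [<-|ij] := eqVneq i j.
  by right; rewrite diagM size_polyXn addnn; split=> //; apply/leqif_refl.
have [->|[e -> lt_e]] := offdiagM ij; [by left | right].
by rewrite size_polyXn; split=> //; split; [exact: ltnW | exact: ltn_eqF].
Qed.

Lemma size_prod_perm_neq1 (s : 'S_n) :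
  s != 1%g -> (size (\prod_i M i (s i))%R <= \sum_i a i)%N.
Proof.
move=> s_neq1.
case: (boolP [exists i, M i (s i) == 0]) => [/existsP [i /eqP Mi0] | /existsPn Mneq0].
  suff -> : \prod_i M i (s i) = 0 by rewrite size_poly0.
  by rewrite (bigD1 i) //= Mi0 mul0r.
pose c i := (size (M i (s i))).-1.
have Mc i : M i (s i) = 'X^(c i) /\ ((c i).*2 <= a i + a (s i) ?= iff (i == s i))%N.
  by case: (entry_monomial i (s i)) => // Mi0; have := Mneq0 i; rewrite Mi0 eqxx.
rewrite (eq_bigr (fun i => 'X^(c i))) => [|i _]; last by case: (Mc i).
rewrite prodrXr size_polyXn.
have /leqif_sum le_sum : forall i, true -> ((c i).*2 <= a i + a (s i) ?= iff (i == s i))%N.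
  by move=> i _; case: (Mc i).
have not_id : ~~ [forall i, i == s i].
  by apply: contra s_neq1 => /forallP s1; apply/eqP/permP => i; rewrite perm1 -(eqP (s1 i)).
have lt_double : (\sum_i (c i).*2 < \sum_i (a i + a (s i)))%N.
  by rewrite ltn_neqAle le_sum.2 not_id le_sum.1.
have sum_perm : (\sum_i a (s i) = \sum_i a i)%N by rewrite [RHS](reindex_perm s).
by rewrite -ltn_double {1}(big_morph double doubleD double0) -addnn -{2}sum_perm -big_split.
Qed.

Lemma monic_det_dominant_diag : \det M \is monic.
Proof.
rewrite /determinant (bigD1 (1%g : 'S_n)) //= odd_perm1 expr0 mul1r.
rewrite (eq_bigr (fun i => 'X^(a i))) => [|i _]; last by rewrite perm1 diagM.
rewrite prodrXr monicE lead_coefDl ?lead_coefXn // size_polyXn ltnS.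
apply: (big_ind (fun q : {poly R} => size q <= \sum_i a i)%N) => [|p q|s s_neq1].
- by rewrite size_poly0.
- by move=> ? ?; apply: leq_trans (size_polyD _ _) _; rewrite geq_max; apply/andP.
by rewrite -signr_odd mulr_sign; case: ifP; rewrite ?size_polyN size_prod_perm_neq1.
Qed.

End DominantDiagonal.

Section MarkedPartition.
Variable k : nat.
Implicit Types (D : {set {set 'I_k}} * {set {set 'I_k}}) (B : {set 'I_k}).

Definition marked_partition D := partition D.1 [set: 'I_k] && (D.2 \subset D.1).
Definition unmarked D := D.1 :\: D.2.

Definition vidx (v : vert k) : 'I_k := match v with inl i | inr i => i end.
Definition is_top (v : vert k) : bool := if v is inl _ then true else false.

Definition dD_linked D (a b : vert k) : bool :=
  (pblock D.1 (vidx a) == pblock D.1 (vidx b))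
  && ((is_top a == is_top b) || (pblock D.1 (vidx a) \in D.2)).

Lemma in_liftT B v : (v \in liftT B) = is_top v && (vidx v \in B).
Proof.
case: v => i /=; first by rewrite (mem_imset _ _ (fun x y => @inl_inj _ _ x y)).
by apply/imsetP => -[].
Qed.

Lemma in_liftB B v : (v \in liftB B) = ~~ is_top v && (vidx v \in B).
Proof.
case: v => i /=; last by rewrite (mem_imset _ _ (fun x y => @inr_inj _ _ x y)).
by apply/imsetP => -[].
Qed.

Lemma in_liftTB B v : (v \in liftT B :|: liftB B) = (vidx v \in B).
Proof. by rewrite in_setU in_liftT in_liftB -andb_orl orbN. Qed.

Variable D : {set {set 'I_k}} * {set {set 'I_k}}.
Hypothesis markedD : marked_partition D.

Lemma marked_sub : D.2 \subset D.1. Proof. by case/andP: markedD. Qed.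

Lemma pblockD_mem i : pblock D.1 i \in D.1.
Proof. by case/andP: markedD => /and3P[/eqP covD _ _] _; rewrite pblock_mem ?covD. Qed.

Lemma mem_pblockD i : i \in pblock D.1 i.
Proof. by case/andP: markedD => /and3P[/eqP covD _ _] _; rewrite mem_pblock covD. Qed.

Lemma def_pblockD B i : B \in D.1 -> i \in B -> pblock D.1 i = B.
Proof. by case/andP: markedD => /and3P[_ trivD _] _; apply: def_pblock. Qed.

Lemma eq_pblockD i j : (pblock D.1 i == pblock D.1 j) = (j \in pblock D.1 i).
Proof. by case/andP: markedD => /and3P[/eqP covD trivD _] _; rewrite eq_pblock ?covD. Qed.

Lemma exists_pblock B : B \in D.1 -> exists i, B = pblock D.1 i.
Proof.
case/andP: markedD => /and3P[_ _ D0] _ DB.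
have /set0Pn[i Bi] : B != set0 by apply: contraNneq D0 => <-.
by exists i; rewrite (def_pblockD DB Bi).
Qed.

Lemma marked_unmarkedU : D.2 :|: unmarked D = D.1.
Proof. by rewrite -[RHS](setID D.1 D.2) (setIidPr marked_sub). Qed.

Lemma dD_linkedP a b : [exists X in dD D, (a \in X) && (b \in X)] = dD_linked D a b.
Proof.
apply/existsP/idP => [[X /and3P[]] | ].
  rewrite !in_setU => /orP[/orP[] | ] /imsetP[B DB ->].
  - rewrite !in_liftTB => Ba Bb; have DB1 := subsetP marked_sub B DB.
    by rewrite /dD_linked !(def_pblockD DB1) ?eqxx ?DB ?orbT.
  - case/setDP: DB => DB1 _; rewrite !in_liftT => /andP[Ta Ba] /andP[Tb Bb].
    by rewrite /dD_linked !(def_pblockD DB1) // Ta Tb !eqxx.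
  - case/setDP: DB => DB1 _; rewrite !in_liftB => /andP[/negbTE Ta Ba] /andP[/negbTE Tb Bb].
    by rewrite /dD_linked !(def_pblockD DB1) // Ta Tb !eqxx.
set P := pblock D.1 (vidx a); case/andP=> Pab.
have Pa : vidx a \in P by exact: mem_pblockD.
have Pb : vidx b \in P by rewrite -eq_pblockD.
have [PT _ | PnT] := boolP (P \in D.2).
  by exists (liftT P :|: liftB P); rewrite /dD -setUA in_setU (imset_f _ PT) !in_liftTB Pa Pb.
rewrite orbF => /eqP top_ab.
have PN : P \in unmarked D by rewrite in_setD PnT pblockD_mem.
case Ta: (is_top a) top_ab => top_ab.
  by exists (liftT P); rewrite /dD !in_setU (imset_f _ PN) ?orbT // !in_liftT -top_ab Ta Pa Pb.
by exists (liftB P); rewrite /dD !in_setU (imset_f _ PN) ?orbT // !in_liftB -top_ab Ta Pa Pb.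
Qed.

End MarkedPartition.

Lemma mem_imset_pinv (aT rT : finType) (f : aT -> rT) (g : rT -> option aT)
    (A : {pred aT}) y :
    pcancel f g -> ocancel g f ->
  (y \in f @: A) = (if g y is Some x then x \in A else false).
Proof.
move=> fK gK; case gy: (g y) => [x|].
  by have := gK y; rewrite gy /= => <-; rewrite (mem_imset _ _ (pcan_inj fK)).
by apply/imsetP => -[x _ yfx]; rewrite yfx fK in gy.
Qed.

Lemma row_neqE :
  ((row0 == row1) = false) * ((row0 == row2) = false) * ((row1 == row2) = false)
  * ((row1 == row0) = false) * ((row2 == row0) = false) * ((row2 == row1) = false).
Proof. by rewrite -!val_eqE /= !inordK. Qed.

Lemma row_cases (r : 'I_3) : [\/ r = row0, r = row1 | r = row2].
Proof.
case: r => -[|[|[|//]]] ?; [apply: Or31 | apply: Or32 | apply: Or33];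
  by apply/val_inj; rewrite /= inordK.
Qed.

Section StackedGraph.
Variable k : nat.
Implicit Types (u w : svert k) (X : {set vert k}).

Definition unemb1 u : option (vert k) :=
  if u.1 == row0 then Some (inl u.2) else if u.1 == row1 then Some (inr u.2) else None.
Definition unemb2 u : option (vert k) :=
  if u.1 == row1 then Some (inl u.2) else if u.1 == row2 then Some (inr u.2) else None.

Lemma emb1K : pcancel (@emb1 k) unemb1.
Proof. by case=> i; rewrite /unemb1 /= ?row_neqE eqxx. Qed.
Lemma unemb1K : ocancel unemb1 (@emb1 k).
Proof.
case=> r i; rewrite /unemb1 /=.
by case: (row_cases r) => ->; rewrite ?row_neqE ?eqxx.
Qed.
Lemma emb2K : pcancel (@emb2 k) unemb2.
Proof. by case=> i; rewrite /unemb2 /= ?row_neqE eqxx. Qed.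
Lemma unemb2K : ocancel unemb2 (@emb2 k).
Proof.
case=> r i; rewrite /unemb2 /=.
by case: (row_cases r) => ->; rewrite ?row_neqE ?eqxx.
Qed.

Section Components.
Variables d1 d2 : diagram k.
Local Notation G := (stack_edge d1 d2).
Local Notation comp := (stack_comp d1 d2).

Lemma stack_edge_sym : symmetric G.
Proof.
by move=> u w; rewrite /stack_edge; congr orb; apply: eq_existsb => B; congr andb; apply: andbC.
Qed.

Lemma stack_connect_sym : connect_sym G.
Proof. exact/sym_connect_sym/stack_edge_sym. Qed.

Lemma mem_stack_comp u w : (w \in comp u) = connect G u w.
Proof. by rewrite inE. Qed.

Lemma stack_comp_id u : u \in comp u.
Proof. by rewrite mem_stack_comp connect0. Qed.

Lemma stack_comp_eq u w : w \in comp u -> comp u = comp w.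
Proof.
rewrite mem_stack_comp => uw; apply/setP => x.
by rewrite !mem_stack_comp (same_connect stack_connect_sym uw).
Qed.

Lemma stack_connect_inv (S : {pred svert k}) u w :
  (forall x y, G x y -> x \in S -> y \in S) -> connect G u w -> (u \in S) = (w \in S).
Proof.
have symG := stack_connect_sym; move=> closedS.
exact: (closed_connect (intro_closed symG closedS)) u w.
Qed.

End Components.

Definition dD_olinked D (a b : option (vert k)) : bool :=
  if a is Some a then if b is Some b then dD_linked D a b else false else false.

Lemma exists_dD_imset D (f : vert k -> svert k) (g : svert k -> option (vert k)) u w :
    marked_partition D -> pcancel f g -> ocancel g f ->
  [exists X in dD D, (u \in f @: X) && (w \in f @: X)] = dD_olinked D (g u) (g w).
Proof.
move=> markedD fK gK; under eq_existsb do rewrite !(mem_imset_pinv _ _ fK gK).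
case: (g u) (g w) => [a|] [b|]; rewrite /= ?dD_linkedP //.
all: by apply/negbTE/existsP => -[X]; rewrite !andbF.
Qed.

Variables D E : {set {set 'I_k}} * {set {set 'I_k}}.
Hypotheses (markedD : marked_partition D) (markedE : marked_partition E).

Local Notation G := (stack_edge (dD D) (dD E)).

Lemma stack_edge_dD u w :
  G u w = dD_olinked D (unemb1 u) (unemb1 w) || dD_olinked E (unemb2 u) (unemb2 w).
Proof.
by rewrite /stack_edge (exists_dD_imset u w markedD emb1K unemb1K)
  (exists_dD_imset u w markedE emb2K unemb2K).
Qed.

Local Notation blkD i := (pblock D.1 i).
Local Notation blkE i := (pblock E.1 i).

Lemma edge_row0 i r j : G (row0, i) (r, j) =
  ((r == row0) || (r == row1) && (blkD i \in D.2)) && (blkD i == blkD j).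
Proof.
rewrite stack_edge_dD /unemb1 /unemb2 /= eqxx !row_neqE /= orbF /dD_linked /=.
by case: (row_cases r) => ->; rewrite ?eqxx ?row_neqE /= ?andbF ?andbT // andbC.
Qed.

Lemma edge_row1 i r j : G (row1, i) (r, j) =
  [|| (r == row0) && (blkD i \in D.2) && (blkD i == blkD j),
      (r == row1) && ((blkD i == blkD j) || (blkE i == blkE j))
    | (r == row2) && (blkE i \in E.2) && (blkE i == blkE j)].
Proof.
rewrite stack_edge_dD /unemb1 /unemb2 /= eqxx !row_neqE /= /dD_linked /=.
by case: (row_cases r) => ->; rewrite ?eqxx ?row_neqE /= ?andbF ?andbT ?orbF // andbC.
Qed.

Lemma edge_row2 i r j : G (row2, i) (r, j) =
  ((r == row2) || (r == row1) && (blkE i \in E.2)) && (blkE i == blkE j).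
Proof.
rewrite stack_edge_dD /unemb1 /unemb2 /= eqxx !row_neqE /= /dD_linked /=.
by case: (row_cases r) => ->; rewrite ?eqxx ?row_neqE /= ?andbF ?andbT // andbC.
Qed.

Lemma edge00 i j : blkD i = blkD j -> G (row0, i) (row0, j).
Proof. by rewrite edge_row0 eqxx => ->; rewrite eqxx. Qed.
Lemma edge01 i : blkD i \in D.2 -> G (row0, i) (row1, i).
Proof. by rewrite edge_row0 !eqxx => ->; rewrite orbT. Qed.
Lemma edge11D i j : blkD i = blkD j -> G (row1, i) (row1, j).
Proof. by rewrite edge_row1 !row_neqE eqxx /= => ->; rewrite eqxx. Qed.
Lemma edge11E i j : blkE i = blkE j -> G (row1, i) (row1, j).
Proof. by rewrite edge_row1 !row_neqE eqxx /= => ->; rewrite eqxx orbT. Qed.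
Lemma edge12 i : blkE i \in E.2 -> G (row1, i) (row2, i).
Proof. by rewrite edge_row1 !row_neqE !eqxx /= => ->. Qed.
Lemma edge22 i j : blkE i = blkE j -> G (row2, i) (row2, j).
Proof. by rewrite edge_row2 eqxx => ->; rewrite eqxx. Qed.

Local Notation comp := (stack_comp (dD D) (dD E)).

Definition mid_comp (B : {set 'I_k}) := [set w | [exists i in B, connect G (row1, i) w]].

Lemma mid_comp_eq (B : {set 'I_k}) i :
  i \in B -> (forall j, j \in B -> G (row1, i) (row1, j)) -> mid_comp B = comp (row1, i).
Proof.
move=> Bi edgeB; apply/setP => w; rewrite inE mem_stack_comp.
apply/existsP/idP => [[j /andP[Bj]] | iw]; last by exists i; rewrite Bi.
exact/connect_trans/connect1/edgeB.
Qed.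

Lemma mid_compD i : mid_comp (blkD i) = comp (row1, i).
Proof.
apply: mid_comp_eq (mem_pblockD markedD i) _ => j ij.
exact/edge11D/esym/(def_pblockD markedD (pblockD_mem markedD i) ij).
Qed.

Lemma mid_compE i : mid_comp (blkE i) = comp (row1, i).
Proof.
apply: mid_comp_eq (mem_pblockD markedE i) _ => j ij.
exact/edge11E/esym/(def_pblockD markedE (pblockD_mem markedE i) ij).
Qed.

Definition loop_comps := [set C in stack_comps (dD D) (dD E) | C \subset middle_row k].

Lemma loop_compsP C :
  C \in loop_comps -> exists2 i, C = comp (row1, i) & comp (row1, i) \subset middle_row k.
Proof.
rewrite inE => /andP[/imsetP[u _ ->] mid_u].
have := subsetP mid_u u (stack_comp_id _ _ u); rewrite inE.
by case: u mid_u => r i /= mid_u /eqP r1; exists i; rewrite -r1.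
Qed.

Lemma loop_unmarkedD i : comp (row1, i) \subset middle_row k -> blkD i \in unmarked D.
Proof.
move=> loop_i; rewrite in_setD pblockD_mem // andbT; apply: contraTN loop_i => DiT.
apply/subsetPn; exists (row0, i); last by rewrite inE row_neqE.
by rewrite mem_stack_comp connect1 // stack_edge_sym edge01.
Qed.

Lemma loop_unmarkedE i : comp (row1, i) \subset middle_row k -> blkE i \in unmarked E.
Proof.
move=> loop_i; rewrite in_setD pblockD_mem // andbT; apply: contraTN loop_i => EiT.
apply/subsetPn; exists (row2, i); last by rewrite inE row_neqE.
by rewrite mem_stack_comp connect1 // edge12.
Qed.

Lemma loop_comps_subD : loop_comps \subset mid_comp @: unmarked D.
Proof.
apply/subsetP => C /loop_compsP[i -> loop_i].
by rewrite -mid_compD imset_f ?loop_unmarkedD.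
Qed.

Lemma loop_comps_subE : loop_comps \subset mid_comp @: unmarked E.
Proof.
apply/subsetP => C /loop_compsP[i -> loop_i].
by rewrite -mid_compE imset_f ?loop_unmarkedE.
Qed.

Lemma nloops_leD : nloops (dD D) (dD E) <= #|unmarked D|.
Proof. exact: leq_trans (subset_leq_card loop_comps_subD) (leq_imset_card _ _). Qed.

Lemma nloops_leE : nloops (dD D) (dD E) <= #|unmarked E|.
Proof. exact: leq_trans (subset_leq_card loop_comps_subE) (leq_imset_card _ _). Qed.

Lemma nloops_eq_card (N : {set {set 'I_k}}) :
    loop_comps \subset mid_comp @: N -> nloops (dD D) (dD E) = #|N| ->
  loop_comps = mid_comp @: N /\ {in N &, injective mid_comp}.
Proof.
move=> sub_loops /= nloopsN; change (#|loop_comps| = #|N|) in nloopsN.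
have le_img := subset_leq_card sub_loops.
split; first by apply/eqP; rewrite eqEcard sub_loops nloopsN leq_imset_card.
by apply/imset_injP; rewrite eqn_leq leq_imset_card -nloopsN le_img.
Qed.

Definition through_classes := [set X in dprod (dD D) (dD E) | through X].
Lemma propnumE : propnum (dprod (dD D) (dD E)) = #|through_classes|.
Proof. by []. Qed.

Definition outer (C : {set svert k}) : {set vert k} := [set v | embo v \in C].

Lemma mem_outer_top C i : (top i \in outer C) = ((row0, i) \in C).
Proof. by rewrite inE. Qed.
Lemma mem_outer_bot C i : (bot i \in outer C) = ((row2, i) \in C).
Proof. by rewrite inE. Qed.

Lemma through_classes_top X : X \in through_classes -> exists i, top i \in X.
Proof. by rewrite inE => /and3P[_ /existsP]. Qed.
Lemma through_classes_bot X : X \in through_classes -> exists i, bot i \in X.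
Proof. by rewrite inE => /and3P[_ _ /existsP]. Qed.

Lemma through_class_top X i : X \in through_classes -> top i \in X -> X = outer (comp (row0, i)).
Proof.
rewrite in_set => /andP[/setD1P[_ /imsetP[_ /imsetP[u _ ->] ->]] _].
by rewrite mem_outer_top => /stack_comp_eq ->.
Qed.

Lemma through_class_bot X i : X \in through_classes -> bot i \in X -> X = outer (comp (row2, i)).
Proof.
rewrite in_set => /andP[/setD1P[_ /imsetP[_ /imsetP[u _ ->] ->]] _].
by rewrite mem_outer_bot => /stack_comp_eq ->.
Qed.

Definition top_block X := if [pick i | top i \in X] is Some i then blkD i else set0.
Definition bot_block X := if [pick i | bot i \in X] is Some i then blkE i else set0.

Lemma top_blockP X : X \in through_classes -> exists2 i, top i \in X & top_block X = blkD i.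
Proof.
move=> thX; rewrite /top_block; case: pickP => [i Xi | noX]; first by exists i.
by have [i Xi] := through_classes_top thX; rewrite noX in Xi.
Qed.

Lemma bot_blockP X : X \in through_classes -> exists2 i, bot i \in X & bot_block X = blkE i.
Proof.
move=> thX; rewrite /bot_block; case: pickP => [i Xi | noX]; first by exists i.
by have [i Xi] := through_classes_bot thX; rewrite noX in Xi.
Qed.

Lemma top_block_outer X i :
  X \in through_classes -> top_block X = blkD i -> X = outer (comp (row0, i)).
Proof.
move=> thX; have [i0 Xi0 ->] := top_blockP thX => /edge00/connect1 i0i.
by rewrite (through_class_top thX Xi0); congr outer; apply: stack_comp_eq; rewrite mem_stack_comp.
Qed.

Lemma bot_block_outer X i :
  X \in through_classes -> bot_block X = blkE i -> X = outer (comp (row2, i)).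
Proof.
move=> thX; have [i0 Xi0 ->] := bot_blockP thX => /edge22/connect1 i0i.
by rewrite (through_class_bot thX Xi0); congr outer; apply: stack_comp_eq; rewrite mem_stack_comp.
Qed.

Lemma top_block_marked X : X \in through_classes -> top_block X \in D.2.
Proof.
move=> thX; have [i Xi ->] := top_blockP thX; have [j Xj] := through_classes_bot thX.
move: Xj; rewrite (through_class_top thX Xi) mem_outer_bot mem_stack_comp.
apply: contraTT => DiT.
pose S := [pred v : svert k | (v.1 == row0) && (blkD v.2 == blkD i)].
have closedS x y : G x y -> x \in S -> y \in S.
  case: x y => r a [r' b] Gab /andP[/= /eqP rx /eqP Ea].
  move: Gab; rewrite rx edge_row0 Ea (negbTE DiT) andbF orbF inE /=.
  by case/andP=> ->; rewrite eq_sym.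
by apply/negP => /(stack_connect_inv closedS); rewrite !inE /= !eqxx row_neqE.
Qed.

Lemma bot_block_marked X : X \in through_classes -> bot_block X \in E.2.
Proof.
move=> thX; have [i Xi ->] := bot_blockP thX; have [j Xj] := through_classes_top thX.
move: Xj; rewrite (through_class_bot thX Xi) mem_outer_top mem_stack_comp.
apply: contraTT => EiT.
pose S := [pred v : svert k | (v.1 == row2) && (blkE v.2 == blkE i)].
have closedS x y : G x y -> x \in S -> y \in S.
  case: x y => r a [r' b] Gab /andP[/= /eqP rx /eqP Ea].
  move: Gab; rewrite rx edge_row2 Ea (negbTE EiT) andbF orbF inE /=.
  by case/andP=> ->; rewrite eq_sym.
by apply/negP => /(stack_connect_inv closedS); rewrite !inE /= !eqxx row_neqE.
Qed.

Lemma top_block_inj : {in through_classes &, injective top_block}.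
Proof.
move=> X Y thX thY; have [i Xi ->] := top_blockP thX; have [j Yj ->] := top_blockP thY.
move=> /edge00/connect1 ij; rewrite (through_class_top thX Xi) (through_class_top thY Yj).
by congr outer; apply: stack_comp_eq; rewrite mem_stack_comp.
Qed.

Lemma bot_block_inj : {in through_classes &, injective bot_block}.
Proof.
move=> X Y thX thY; have [i Xi ->] := bot_blockP thX; have [j Yj ->] := bot_blockP thY.
move=> /edge22/connect1 ij; rewrite (through_class_bot thX Xi) (through_class_bot thY Yj).
by congr outer; apply: stack_comp_eq; rewrite mem_stack_comp.
Qed.

Lemma top_block_sub : top_block @: through_classes \subset D.2.
Proof. by apply/subsetP => _ /imsetP[X thX ->]; apply: top_block_marked. Qed.
Lemma bot_block_sub : bot_block @: through_classes \subset E.2.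
Proof. by apply/subsetP => _ /imsetP[X thX ->]; apply: bot_block_marked. Qed.

Lemma propnum_leD : propnum (dprod (dD D) (dD E)) <= #|D.2|.
Proof. by rewrite propnumE -(card_in_imset top_block_inj) subset_leq_card ?top_block_sub. Qed.

Lemma top_block_onto : propnum (dprod (dD D) (dD E)) = #|D.2| -> top_block @: through_classes = D.2.
Proof.
move=> prop_eq; apply/eqP; rewrite eqEcard top_block_sub.
by rewrite (card_in_imset top_block_inj) -propnumE prop_eq leqnn.
Qed.

Lemma bot_block_onto : propnum (dprod (dD D) (dD E)) = #|E.2| -> bot_block @: through_classes = E.2.
Proof.
move=> prop_eq; apply/eqP; rewrite eqEcard bot_block_sub.
by rewrite (card_in_imset bot_block_inj) -propnumE prop_eq leqnn.
Qed.

End StackedGraph.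

Section ExtremalEntry.
Variable k : nat.
Implicit Types i j : 'I_k.
Variables D E : {set {set 'I_k}} * {set {set 'I_k}}.
Hypotheses (markedD : marked_partition D) (markedE : marked_partition E).
Hypotheses (propD : propnum (dprod (dD D) (dD E)) = #|D.2|)
           (propE : propnum (dprod (dD D) (dD E)) = #|E.2|).
Hypotheses (loopsD : nloops (dD D) (dD E) = #|unmarked D|)
           (loopsE : nloops (dD D) (dD E) = #|unmarked E|).

Local Notation G := (stack_edge (dD D) (dD E)).
Local Notation comp := (stack_comp (dD D) (dD E)).
Local Notation blkD i := (pblock D.1 i).
Local Notation blkE i := (pblock E.1 i).

Lemma loop_memD i j :
  comp (row1, i) \subset middle_row k -> ((row1, j) \in comp (row1, i)) = (blkD i == blkD j).
Proof.
move=> loop_i; have [_ injD] := nloops_eq_card (loop_comps_subD markedD markedE) loopsD.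
apply/idP/eqP => [ij | /(edge11D markedD markedE)/connect1]; last by rewrite mem_stack_comp.
have loop_j : comp (row1, j) \subset middle_row k by rewrite -(stack_comp_eq ij).
apply: injD; try exact: (loop_unmarkedD markedD markedE).
by rewrite !(mid_compD markedD markedE) (stack_comp_eq ij).
Qed.

Lemma loop_memE i j :
  comp (row1, i) \subset middle_row k -> ((row1, j) \in comp (row1, i)) = (blkE i == blkE j).
Proof.
move=> loop_i; have [_ injE] := nloops_eq_card (loop_comps_subE markedD markedE) loopsE.
apply/idP/eqP => [ij | /(edge11E markedD markedE)/connect1]; last by rewrite mem_stack_comp.
have loop_j : comp (row1, j) \subset middle_row k by rewrite -(stack_comp_eq ij).
apply: injE; try exact: (loop_unmarkedE markedD markedE).
by rewrite !(mid_compE markedD markedE) (stack_comp_eq ij).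
Qed.

Lemma unmarked_sub : unmarked D \subset unmarked E.
Proof.
have [loopsN _] := nloops_eq_card (loop_comps_subD markedD markedE) loopsD.
apply/subsetP => B DB; have [i Bi] := exists_pblock markedD (subsetP (subsetDl _ _) B DB).
rewrite Bi in DB *; have : comp (row1, i) \in loop_comps D E.
  by rewrite loopsN -(mid_compD markedD markedE) imset_f.
rewrite inE => /andP[_ loop_i].
suff -> : blkD i = blkE i by have := loop_unmarkedE markedD markedE loop_i.
by apply/setP => j; rewrite -!eq_pblockD // -loop_memD // loop_memE.
Qed.

Lemma unmarked_eq : unmarked D = unmarked E.
Proof. by apply/eqP; rewrite eqEcard unmarked_sub -loopsD loopsE leqnn. Qed.

Lemma unmarked_pblockD i : blkD i \in unmarked D -> blkE i = blkD i.
Proof.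
rewrite unmarked_eq => /setDP[DiE _].
by have := def_pblockD markedE DiE (mem_pblockD markedD i).
Qed.

Lemma unmarked_pblockE i : blkE i \in unmarked E -> blkD i = blkE i.
Proof.
rewrite -unmarked_eq => /setDP[EiD _].
by have := def_pblockD markedD EiD (mem_pblockD markedE i).
Qed.

Lemma marked_pblockDE i : (blkD i \in D.2) = (blkE i \in E.2).
Proof.
apply/idP/idP; apply: contraLR => notT.
- have Ei : blkE i \in unmarked E by rewrite in_setD notT pblockD_mem.
  by move: (Ei); rewrite -(unmarked_pblockE Ei) -unmarked_eq => /setDP[].
- have Di : blkD i \in unmarked D by rewrite in_setD notT pblockD_mem.
  by move: (Di); rewrite -(unmarked_pblockD Di) unmarked_eq => /setDP[].
Qed.

Lemma marked_linkD i j :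
  blkD i \in D.2 -> blkD j \in D.2 -> connect G (row0, i) (row0, j) -> blkD i = blkD j.
Proof.
rewrite -!(top_block_onto markedD markedE propD) => /imsetP[X thX Xi] /imsetP[Y thY Yj] ij.
rewrite Xi Yj (top_block_outer markedD markedE thX (esym Xi)).
rewrite (top_block_outer markedD markedE thY (esym Yj)).
by congr (top_block _ (outer _)); apply: stack_comp_eq; rewrite mem_stack_comp.
Qed.

Lemma marked_linkE i j :
  blkE i \in E.2 -> blkE j \in E.2 -> connect G (row2, i) (row2, j) -> blkE i = blkE j.
Proof.
rewrite -!(bot_block_onto markedD markedE propE) => /imsetP[X thX Xi] /imsetP[Y thY Yj] ij.
rewrite Xi Yj (bot_block_outer markedD markedE thX (esym Xi)).
rewrite (bot_block_outer markedD markedE thY (esym Yj)).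
by congr (bot_block _ (outer _)); apply: stack_comp_eq; rewrite mem_stack_comp.
Qed.

Lemma marked_pblock_eq i : blkD i \in D.2 -> blkD i = blkE i.
Proof.
move=> Di; have Ei : blkE i \in E.2 by rewrite -marked_pblockDE.
apply/setP => j; rewrite -!eq_pblockD //; apply/eqP/eqP => ij.
- apply: marked_linkE => //; first by rewrite -marked_pblockDE -ij.
  apply: connect_trans (connect1 _) (connect_trans (connect1 (edge11D markedD markedE ij)) _).
    by rewrite stack_edge_sym edge12.
  by rewrite connect1 // edge12 // -marked_pblockDE -ij.
- apply: marked_linkD => //; first by rewrite marked_pblockDE -ij.
  apply: connect_trans (connect1 (edge01 markedD markedE Di)) _.
  apply: connect_trans (connect1 (edge11E markedD markedE ij)) _.
  by rewrite connect1 // stack_edge_sym edge01 // marked_pblockDE -ij.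
Qed.

Lemma marked_eq : D.2 = E.2.
Proof.
apply/eqP; rewrite eqEcard -propD propE leqnn andbT.
apply/subsetP => B DB; have [i Bi] := exists_pblock markedD (subsetP (marked_sub markedD) B DB).
by rewrite Bi marked_pblock_eq -?marked_pblockDE -?Bi.
Qed.

Lemma extremal_entry_eq : D = E.
Proof.
have eq1 : D.1 = E.1.
  by rewrite -(marked_unmarkedU markedD) -(marked_unmarkedU markedE) marked_eq unmarked_eq.
by case: D E eq1 marked_eq => [? ?] [? ?] /= -> ->.
Qed.

End ExtremalEntry.

Lemma nloops_double_ltn k (D E : {set {set 'I_k}} * {set {set 'I_k}}) :
    marked_partition D -> marked_partition E ->
    propnum (dprod (dD D) (dD E)) = #|D.2| -> propnum (dprod (dD D) (dD E)) = #|E.2| ->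
  D != E -> (nloops (dD D) (dD E)).*2 < #|unmarked D| + #|unmarked E|.
Proof.
move=> markedD markedE propD propE; apply: contraNT; rewrite -leqNgt => le_sum.
have leD := nloops_leD markedD markedE; have leE := nloops_leE markedD markedE.
by apply/eqP/extremal_entry_eq => //; lia.
Qed.

Section DiagonalEntry.
Variables (k : nat) (D : {set {set 'I_k}} * {set {set 'I_k}}).
Hypothesis markedD : marked_partition D.

Local Notation G := (stack_edge (dD D) (dD D)).
Local Notation comp := (stack_comp (dD D) (dD D)).
Local Notation blkD i := (pblock D.1 i).

Lemma diag_edge_pblock r i r' j : G (r, i) (r', j) -> blkD i = blkD j.
Proof.
case: (row_cases r) => ->.
- by rewrite edge_row0 // => /andP[_ /eqP].
- by rewrite edge_row1 // => /or3P[/andP[_ /eqP] | /andP[_ /orP[] /eqP] | /andP[_ /eqP]].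
- by rewrite edge_row2 // => /andP[_ /eqP].
Qed.

Lemma diag_comp_pblock r i u : u \in comp (r, i) -> u.2 \in blkD i.
Proof.
pose S := [pred v : svert k | v.2 \in blkD i].
have closedS x y : G x y -> x \in S -> y \in S.
  by case: x y => r1 a [r2 b] /diag_edge_pblock ab; rewrite !inE /= -!eq_pblockD // ab.
rewrite mem_stack_comp => /(stack_connect_inv closedS).
by rewrite !inE /= mem_pblockD.
Qed.

Lemma diag_mid_comp i :
  blkD i \in unmarked D -> comp (row1, i) = [set (row1, j) | j in blkD i].
Proof.
move=> /setDP[_ DiT]; apply/setP => u; apply/idP/imsetP => [iu | [j ij ->]].
  pose S := [pred v : svert k | (v.1 == row1) && (v.2 \in blkD i)].
  have closedS x y : G x y -> x \in S -> y \in S.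
    case: x y => r1 a [r2 b] Gab /andP[/= /eqP r1E ai]; move: Gab.
    have ia : blkD a = blkD i by apply: def_pblockD (pblockD_mem markedD i) ai.
    rewrite r1E edge_row1 // ia (negbTE DiT) !andbF orbF /= inE /=.
    by case/andP=> -> /orP[] ib; rewrite -(eq_pblockD markedD).
  move: iu; rewrite mem_stack_comp => /(stack_connect_inv closedS).
  rewrite !inE /= eqxx (mem_pblockD markedD) => /esym/andP[/eqP u1 ui].
  by exists u.2 => //; case: u u1 ui => /= r ? ->.
rewrite mem_stack_comp connect1 // edge11D //.
by apply/esym/def_pblockD => //; apply: pblockD_mem.
Qed.

Lemma diag_nloops : nloops (dD D) (dD D) = #|unmarked D|.
Proof.
pose mid (B : {set 'I_k}) : {set svert k} := [set (row1, j) | j in B].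
have mid_inj : injective mid by apply: imset_inj => x y [].
apply/eqP; rewrite eqn_leq nloops_leD // -(card_imset _ mid_inj) subset_leq_card //.
apply/subsetP => _ /imsetP[B DB ->].
have [i Bi] := exists_pblock markedD (subsetP (subsetDl _ _) B DB); rewrite Bi in DB *.
rewrite inE /mid -diag_mid_comp // imset_f //=.
by apply/subsetP => u; rewrite diag_mid_comp // => /imsetP[j _ ->]; rewrite inE.
Qed.

Lemma diag_propnum : propnum (dprod (dD D) (dD D)) = #|D.2|.
Proof.
apply/eqP; rewrite eqn_leq propnum_leD // propnumE.
apply: leq_trans _ (leq_imset_card (top_block D) _); apply/subset_leq_card/subsetP => B DB.
have [i Bi] := exists_pblock markedD (subsetP (marked_sub markedD) B DB); rewrite Bi in DB *.
set X := outer (comp (row0, i)).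
have Xi : top i \in X by rewrite mem_outer_top stack_comp_id.
have thX : X \in through_classes D D.
  rewrite !inE; apply/and3P; split.
  - apply/andP; split; first by apply/set0Pn; exists (top i).
    by apply/imsetP; exists (comp (row0, i)); rewrite ?imset_f.
  - by apply/existsP; exists i.
  apply/existsP; exists i; rewrite mem_outer_bot mem_stack_comp.
  apply: connect_trans (connect1 (edge01 markedD markedD DB)) (connect1 _).
  by rewrite (edge12 markedD markedD).
apply/imsetP; exists X => //; have [i0 Xi0 ->] := top_blockP thX.
rewrite mem_outer_top in Xi0; have /= i0i := diag_comp_pblock Xi0.
exact/esym/(def_pblockD markedD (pblockD_mem markedD i) i0i).
Qed.

End DiagonalEntry.

Lemma JpredP k s (D : {set {set 'I_k}} * {set {set 'I_k}}) :
  Jpred s D -> marked_partition D /\ #|D.2| = s.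
Proof. by case/and3P => partD subD /eqP cardT; split => //; apply/andP. Qed.

Theorem lemma3p9 (k s : nat) (hk : (1 <= k)%N) (hs : (s <= k)%N) :
  (\det (Gram k s) != 0)%R /\ lead_coef (\det (Gram k s)) = 1%R.
Proof.
pose J (i : 'I_#|{: Jks k s}|) := val (enum_val i).
suff detM : (\det (Gram k s) \is monic)%R by split; [exact: monic_neq0 | exact/monicP].
apply: (monic_det_dominant_diag (a := fun i => #|unmarked (J i)|)) => [i | i j ij].
  have [markedD cardT] := JpredP (valP (enum_val i)).
  by rewrite mxE /gram_entry diag_propnum // cardT eqxx diag_nloops.
have [markedD cardD] := JpredP (valP (enum_val i)).
have [markedE cardE] := JpredP (valP (enum_val j)).
rewrite mxE /gram_entry; case: eqP => [propJ | _]; [right | by left].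
exists (nloops (dD (J i)) (dD (J j))) => //.
apply: nloops_double_ltn; rewrite ?propJ ?cardD ?cardE //.
by apply: contra ij => /eqP/val_inj/enum_val_inj ->.
Qed.
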